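(* Consider an execution of the MBBA protocol (described in the context) in which fewer than $n/3$ of the $n$ players are malicious. For each component $c\in\{1,\dots,m\}$: if $c$-agreement holds at (the end of) some step, then it continues to hold in all subsequent steps.
   Context: Network model: $n$ players; every pair is joined by a direct private channel; synchronous steps, instantaneous delivery. Fewer than $n/3$ players are malicious (arbitrary behaviour); honest players follow the protocol and send the same message to every player. For player $i$, step $s$, component $c$ and value $v$, $\#_i^s(v,c)$ is the number of distinct players from which $i$ received in step $s$ a valid vector message whose $c$-th component is $v$ (counting $i$'s own); conflicting messages from one sender in one step are both discarded, duplicates count once. $c$-agreement holds (at a given moment) if there is a value $v$ such that the $c$-th component $b_{j,c}$ of every honest player $j$'s current vector equals $v$. Protocol MBBA: $H$ is a hash function modeled as a random oracle (outputs ordered lexicographically); $\mathrm{SIG}_i$ is a unique-signature scheme with publicly known keys; $r$ a common random string; counter $\gamma$ starts at 0. Player $i$ holds $\mathbf{b}_i\in\{0,1\}^m$ and $\mathbf{f}_i$, initially all zeros. EXIT CHECK: if $\mathbf{f}_i$ is all ones, $i$ sends $\mathbf{b}_i$ marked final (treated by receivers as $i$'s message in all later steps), outputs $\mathbf{b}_i$ and halts. STEP 1: $i$ sends $\mathbf{b}_i$; for each $c$ with $f_{i,c}=0$: if $\#_i^1(0,c)>\frac23 n$, set $b_{i,c}=0$, $f_{i,c}=1$, perform EXIT CHECK; else if $\#_i^1(1,c)>\frac23n$, set $b_{i,c}=1$; else $b_{i,c}=0$. STEP 2: $i$ sends $\mathbf{b}_i$; for each $c$ with $f_{i,c}=0$: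 if $\#_i^2(1,c)>\frac23 n$, set $b_{i,c}=1$, $f_{i,c}=1$, perform EXIT CHECK; else if $\#_i^2(0,c)>\frac23n$, set $b_{i,c}=0$; else $b_{i,c}=1$. STEP 3: $i$ sends $s_i=\mathrm{SIG}_i(r\|\gamma)$ and $\mathbf{b}_i$; for each $c$ with $f_{i,c}=0$: if $\#_i^3(0,c)>\frac23n$, $b_{i,c}=0$; else if $\#_i^3(1,c)>\frac23n$, $b_{i,c}=1$; else $b_{i,c}=k_c$, the $c$-th bit of $k=H(\min_{j\in P_i}H(s_j))$ where $P_i$ is the set of players who sent $i$ a valid STEP 3 message. Then $\gamma\leftarrow\gamma+1$ and return to STEP 1. *)

From mathcomp Require Import all_boot.
Set Implicit Arguments.
Unset Strict Implicit.
Unset Printing Implicit Defensive.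

(* Players are 'I_n, components are 'I_m (component c of the paper, 1<=c<=m,
   is index c-1 here).  Global steps are numbered t = 1,2,3,...; step t is
   STEP 1, 2 or 3 of the protocol according as (t-1) %% 3 = 0, 1, 2, and
   during a STEP 3 occurring at global step t the counter gamma equals
   (t-1) %/ 3.  The state "at time t" is the state at the end of step t
   (t = 0: initial state). *)

Fixpoint lexle (s1 s2 : seq bool) : bool :=
  match s1, s2 with
  | [::], _ => true
  | _ :: _, [::] => false
  | x :: s1', y :: s2' => (~~ x && y) || ((x == y) && lexle s1' s2')
  end.

Definition lexmin (l : seq (seq bool)) : seq bool :=
  match l with
  | [::] => [::]
  | a :: l' => foldl (fun acc x => if lexle acc x then acc else x) a l'
  end.

(* #_i^s(v,c): number of distinct players whose (valid, non-conflicting)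
   message received by i in the step has c-th component v.  [recv j] is
   [Some x] iff i received from j in that step exactly one valid vector
   message (up to duplicates), namely x; it is [None] otherwise (nothing,
   invalid, or conflicting messages, which are discarded). *)
Definition count_val n m (recv : 'I_n -> option ('I_m -> bool))
    (c : 'I_m) (v : bool) : nat :=
  #|[set j : 'I_n | if recv j is Some x then x c == v else false]|.

(* The coin k_c = c-th bit of H(min_{j in P_i} H(s_j)), where the valid
   STEP 3 signature of j is s_j = SIG_j(r || gamma) = sig j gamma (unique
   signatures: a valid signature is the unique one). *)
Definition coin n (H : seq bool -> seq bool) (sig : 'I_n -> nat -> seq bool)
    (Pset : {set 'I_n}) (gamma c : nat) : bool :=
  nth false (H (lexmin [seq H (sig j gamma) | j <- enum Pset])) c.

(* Update of (b_{i,c}, f_{i,c}) for a component with f_{i,c} = 0, in a step of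
   type ty (0 = STEP 1, 1 = STEP 2, 2 = STEP 3), given c0 = #(0,c),
   c1 = #(1,c), and the coin bit.  "k > 2n/3" is written 2n < 3k. *)
Definition update (n ty c0 c1 : nat) (k : bool) : bool * bool :=
  let sup x := 2 * n < 3 * x in
  if ty == 0 then
    (if sup c0 then (false, true) else if sup c1 then (true, false)
     else (false, false))
  else if ty == 1 then
    (if sup c1 then (true, true) else if sup c0 then (false, false)
     else (true, false))
  else
    (if sup c0 then (false, false) else if sup c1 then (true, false)
     else (k, false)).

(* An execution of MBBA.  honest = set of honest players; H = random oracle;
   sig j gamma = SIG_j(r || gamma); P t i = set of players from whom i received
   a valid STEP 3 message in step t; recv t i j = message counted by i from j
   in step t; b, f, halted = states of the players at the end of each step.
   Only honest players are constrained; malicious ones are arbitrary. *)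
Definition mbba_execution n m (honest : {set 'I_n})
    (H : seq bool -> seq bool) (sig : 'I_n -> nat -> seq bool)
    (P : nat -> 'I_n -> {set 'I_n})
    (recv : nat -> 'I_n -> 'I_n -> option ('I_m -> bool))
    (b f : nat -> 'I_n -> 'I_m -> bool) (halted : nat -> 'I_n -> bool) : Prop :=
  [/\
   (* initially f_i is all zeros and nobody has halted (b_i 0 is the input) *)
   (forall i, i \in honest -> (forall c, f 0 i c = false) /\ halted 0 i = false),
   (* honest players send the same vector to everybody; a halted honest
      player's final vector is its message in all later steps *)
   (forall t i j, i \in honest -> j \in honest -> recv t.+1 i j = Some (b t j)),
   (forall t i j, t %% 3 = 2 -> i \in honest -> j \in honest -> ~~ halted t j ->
      j \in P t.+1 i),
   (forall t i, i \in honest -> halted t i ->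
      [/\ forall c, b t.+1 i c = b t i c, forall c, f t.+1 i c = f t i c
        & halted t.+1 i]) &
   (* the step rules, followed by EXIT CHECK *)
   (forall t i, i \in honest -> ~~ halted t i ->
      (forall c : 'I_m,
         if f t i c then b t.+1 i c = b t i c /\ f t.+1 i c = true
         else (b t.+1 i c, f t.+1 i c) =
              update n (t %% 3)
                (count_val (recv t.+1 i) c false)
                (count_val (recv t.+1 i) c true)
                (coin H sig (P t.+1 i) (t %/ 3) c))
      /\ halted t.+1 i =
           [exists c, ~~ f t i c && f t.+1 i c] && [forall c, f t.+1 i c])].

Definition agreement n m (honest : {set 'I_n}) (b : nat -> 'I_n -> 'I_m -> bool)
    (t : nat) (c : 'I_m) : Prop :=
  exists v : bool, forall j, j \in honest -> b t j c = v.

(* If all honest players hold v in component c, every honest player counts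
   at least n - #|~: honest| > 2n/3 votes for v and at most #|~: honest| < n/3
   for ~~ v.  So whatever the step type, the "> 2n/3" test for v succeeds and
   the one for ~~ v fails, and each rule of MBBA (in particular the STEP 3
   rule, which never reaches the coin) keeps b_{i,c} = v; halted players and
   components with f_{i,c} = 1 are not updated at all. *)

From mathcomp Require Import all_boot zify.

Set Implicit Arguments.
Unset Strict Implicit.
Unset Printing Implicit Defensive.

Lemma update_fst_supermajority n ty (cnt : bool -> nat) k v :
  2 * n < 3 * cnt v -> 3 * cnt (~~ v) <= 2 * n ->
  (update n ty (cnt false) (cnt true) k).1 = v.
Proof.
move=> sup; rewrite leqNgt => /negbTE notsup.
by case: v sup notsup => /= sup notsup; rewrite /update sup notsup;
  case: (ty == 0); case: (ty == 1).
Qed.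

Section UnanimousHonestVotes.

Variables (n m : nat) (honest : {set 'I_n}).
Variables (recv : 'I_n -> option ('I_m -> bool)) (x : 'I_n -> 'I_m -> bool).
Variables (c : 'I_m) (v : bool).
Hypothesis recv_honest : forall j, j \in honest -> recv j = Some (x j).
Hypothesis vote_honest : forall j, j \in honest -> x j c = v.

Lemma card_honest_le_count_val : #|honest| <= count_val recv c v.
Proof.
apply/subset_leq_card/subsetP => j jh.
by rewrite inE recv_honest // vote_honest.
Qed.

Lemma count_val_negb_le_card_dishonest : count_val recv c (~~ v) <= #|~: honest|.
Proof.
apply/subset_leq_card/subsetP => j; rewrite !inE; apply: contraL => jh.
by rewrite recv_honest // vote_honest //; case: (v).
Qed.

Lemma count_val_supermajority :
  3 * #|~: honest| < n ->
  2 * n < 3 * count_val recv c v /\ 3 * count_val recv c (~~ v) <= 2 * n.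
Proof.
have := cardsC honest; rewrite card_ord => card_split few_malicious.
have := card_honest_le_count_val; have := count_val_negb_le_card_dishonest.
lia.
Qed.

End UnanimousHonestVotes.

Section Execution.

Variables (n m : nat) (honest : {set 'I_n}).
Variables (H : seq bool -> seq bool) (sig : 'I_n -> nat -> seq bool).
Variables (P : nat -> 'I_n -> {set 'I_n}).
Variables (recv : nat -> 'I_n -> 'I_n -> option ('I_m -> bool)).
Variables (b f : nat -> 'I_n -> 'I_m -> bool) (halted : nat -> 'I_n -> bool).
Hypothesis few_malicious : 3 * #|~: honest| < n.
Hypothesis exec : mbba_execution honest H sig P recv b f halted.

Lemma agreement_succ s c :
  agreement honest b s c -> agreement honest b s.+1 c.
Proof.
case: exec => _ recv_honest _ halted_frozen step_rule [v agree].
exists v => j jh; case halted_j: (halted s j).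
  by have [-> _ _] := halted_frozen s j jh halted_j; apply: agree.
have [/(_ c) rule_c _] := step_rule s j jh (negbT halted_j).
case: (f s j c) rule_c => [[-> _] | /(congr1 fst) /= ->]; first exact: agree.
have [sup notsup] := count_val_supermajority
  (fun k => recv_honest s j k jh) agree few_malicious.
exact: (@update_fst_supermajority _ _ (count_val (recv s.+1 j) c) _ _ sup notsup).
Qed.

Lemma agreement_monotone s s' c :
  s <= s' -> agreement honest b s c -> agreement honest b s' c.
Proof.
move=> /subnK <-; elim: (s' - s) => [//|d IH] agree_s.
exact/agreement_succ/IH.
Qed.

End Execution.

Theorem lemma2 (n m : nat) (honest : {set 'I_n})
    (H : seq bool -> seq bool) (sig : 'I_n -> nat -> seq bool)
    (P : nat -> 'I_n -> {set 'I_n})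
    (recv : nat -> 'I_n -> 'I_n -> option ('I_m -> bool))
    (b f : nat -> 'I_n -> 'I_m -> bool) (halted : nat -> 'I_n -> bool)
    (c : 'I_m) (t t' : nat) :
  3 * #|~: honest| < n ->
  mbba_execution honest H sig P recv b f halted ->
  0 < t -> t <= t' ->
  agreement honest b t c -> agreement honest b t' c.
Proof.
move=> few_malicious exec _.
exact: agreement_monotone few_malicious exec t t' c.
Qed.
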